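(* Suppose $1<R\le n$ and let $\ell_2=\min\{n,\lfloor n/R\rfloor\}$. Then for every bid set $B_{\mathcal D}$ of $\mathcal D$ (a multiset of $n$ nonnegative reals with sum $\beta$), $$W(\pi_{\rm unif},B_{\mathcal D})\ge f(\ell_2).$$
   Context: Position-randomized auction with two bidders $\mathcal A$ and $\mathcal D$ and $n\ge1$ objects. $\mathcal D$ has budget $\beta>0$ and $\mathcal A$ has budget $R\beta$ with $R>0$. A bidding algorithm of a bidder is a pair $(\pi,B)$: $B$ (the bid set) is a multiset of $n$ nonnegative reals whose sum is at most the bidder's budget, and $\pi$ is a randomized algorithm permuting sequences of length $n$. Applying $\pi$ to a listing of $B$ gives the final bid sequence, whose $i$-th entry is the bid on object $i$. The two bidders' permutations are independent. Each object goes to the higher bid; on a tie each bidder wins it with probability $1/2$. $w(\pi_{\mathcal A},\pi_{\mathcal D},B_{\mathcal A},B_{\mathcal D})$ is the expected number of objects won by $\mathcal A$. $W(\pi_{\mathcal D},B_{\mathcal D})$ is its supremum over all bidding algorithms $(\pi_{\mathcal A},B_{\mathcal A})$ of $\mathcal A$. $\pi_{\rm unif}$ applies a uniformly random permutation. For $x,y>0$, $\mathrm{less}(x,y)=y(\lceil x/y\rceil-1)$. For $\ell=1,\dots,n$, let $R_\ell=\mathrm{less}(R,\frac2{\ell(\ell+1)})$ and $f(\ell)=n-\ell+\frac{\ell(\ell+1)R_\ell}{2n}$. *)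

From HB Require Import structures.
From mathcomp Require Import all_boot all_order all_algebra all_fingroup.
From mathcomp Require Import classical_sets reals.
Set Implicit Arguments. Unset Strict Implicit. Unset Printing Implicit Defensive.
Import Order.TTheory GRing.Theory Num.Theory.
Local Open Scope ring_scope.
Local Open Scope classical_set_scope.

Section Auction.
Variable RT : realType.

(* Probability that A wins an object on which A bids a and D bids d. *)
Definition win (a d : RT) : RT :=
  if d < a then 1 else if a == d then 1 / 2 else 0.

(* A randomized permuting algorithm: a probability distribution on the
   permutations of the n positions.  Applying permutation s to a listing
   b : 'I_n -> RT gives the final bid sequence i |-> b (s i). *)
Definition is_distr (n : nat) (p : {perm 'I_n} -> RT) : Prop :=
  (forall s, 0 <= p s) /\ \sum_(s : {perm 'I_n}) p s = 1.

Definition bid_set (n : nat) (budget : RT) (b : 'I_n -> RT) : Prop :=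
  (forall i, 0 <= b i) /\ \sum_(i < n) b i <= budget.

Definition pi_unif (n : nat) : {perm 'I_n} -> RT := fun _ => (n`!%:R)^-1.

(* expected number of objects won by A *)
Definition w (n : nat) (pA pD : {perm 'I_n} -> RT) (bA bD : 'I_n -> RT) : RT :=
  \sum_(sA : {perm 'I_n}) \sum_(sD : {perm 'I_n})
     pA sA * pD sD * \sum_(i < n) win (bA (sA i)) (bD (sD i)).

Definition W (n : nat) (rho beta : RT) (pD : {perm 'I_n} -> RT) (bD : 'I_n -> RT) : RT :=
  sup [set x : RT | exists (pA : {perm 'I_n} -> RT) (bA : 'I_n -> RT),
          is_distr pA /\ bid_set (rho * beta) bA /\ x = w pA pD bA bD].

Definition less (x y : RT) : RT := y * ((Num.ceil (x / y))%:~R - 1).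

Definition R_ell (rho : RT) (l : nat) : RT := less rho (2 / (l * l.+1)%:R).

Definition f (n : nat) (rho : RT) (l : nat) : RT :=
  n%:R - l%:R + (l * l.+1)%:R * R_ell rho l / (2 * n%:R).

(* ell_2 = min(n, floor(n / R)) ; floor(n/R) >= 0 here, cast to nat via absz *)
Definition ell2 (n : nat) (rho : RT) : nat :=
  minn n `|Num.floor (n%:R / rho)|%N.

End Auction.

(* Against the uniform permutation of D, a deterministic bidder A with bids a
   wins (1/n) sum_i sum_k win (a i) (b k) objects in expectation, where
   b_0 >= ... >= b_(n-1) are D's bids sorted.  With l = ell2 n rho, A picks
   nondecreasing levels C_t <= n (t < l), each the largest integer below
   rho (t+1) or that plus one, with sum_t C_t = ceil (rho l (l+1) / 2) - 1; its
   i-th bid slightly exceeds b_(L i), where L i = #{t | C_t <= i}, and so beats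
   every b_k with k >= L i, for n (n - l) + sum_t C_t = n f(l) wins in total.
   The cost sum_i b_(L i) <= n b_l + sum_t (b_t - b_(t+1)) C_t stays strictly
   below rho beta, because beta >= sum_(t<l) (t+1) (b_t - b_(t+1)) + (l+1) b_l,
   n < rho (l+1), and the rounding up is done on the smallest gaps b_t - b_(t+1);
   the remaining slack pays for the margin over D's bids. *)

From HB Require Import structures.
From mathcomp Require Import all_boot all_order all_algebra all_fingroup.
From mathcomp Require Import classical_sets reals.
From mathcomp Require Import ring lra zify.
Import Order.TTheory GRing.Theory Num.Theory.
Local Open Scope ring_scope.

Lemma sum_ord_ltn n c : (c <= n)%N -> (\sum_(i < n) (i < c) = c)%N.
Proof.
move=> cn; rewrite -(big_mkord xpredT (fun i => (i < c) : nat)).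
rewrite (big_cat_nat (leq0n c) cn) /= [X in (_ + X)%N]big_nat_cond.
rewrite [X in (_ + X)%N]big1 ?addn0; last first.
  by move=> i /andP[/andP[ci _] _]; rewrite ltnNge ci.
rewrite big_nat_cond (eq_bigr (fun _ => 1%N)); last by move=> i /andP[/andP[_ ->]].
by rewrite -big_nat_cond sum_nat_const_nat subn0 muln1.
Qed.

Lemma sum_ord_geq n c : (c <= n)%N -> (\sum_(i < n) (c <= i) = n - c)%N.
Proof.
move=> cn; have : (\sum_(i < n) (i < c) + \sum_(i < n) (c <= i) = n)%N.
  rewrite -big_split /= -[n in RHS]card_ord -sum1_card.
  by apply: eq_bigr => i _; case: ltnP.
by rewrite sum_ord_ltn //; lia.
Qed.

Lemma telescope_ord {RT : zmodType} (b : nat -> RT) {m k} : (k <= m)%N ->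
  b k = b m + \sum_(t < m) (b t - b t.+1) *+ (k <= t).
Proof.
elim: m => [|m IHm] km; first by move: km; rewrite leqn0 => /eqP ->; rewrite big_ord0 addr0.
rewrite big_ord_recr /=; have [km1 | ->] : (k <= m)%N \/ k = m.+1 by lia.
  by rewrite IHm // km1 mulr1n addrCA addrC subrKC.
by rewrite big1 ?ltnn ?addr0 // => t _; rewrite ltnNge ltnW.
Qed.

Lemma sum_by_parts (R : comRingType) (b : nat -> R) m :
  \sum_(k < m.+1) b k = \sum_(t < m) t.+1%:R * (b t - b t.+1) + m.+1%:R * b m.
Proof.
elim: m => [|m IHm]; first by rewrite big_ord1 big_ord0 add0r mul1r.
rewrite big_ord_recr /= IHm [in RHS]big_ord_recr /= -[m.+2%:R]natr1.
set S := \sum_(t < m) _; set x := m.+1%:R; ring.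
Qed.

Lemma triangular_sum (R : pzSemiRingType) l : (\sum_(t < l) t.+1%:R : R) * 2 = (l * l.+1)%:R.
Proof.
elim: l => [|l IHl]; first by rewrite big_ord0 mul0r.
by rewrite big_ord_recr /= mulrDl IHl -!natrM -natrD; congr (_%:R); lia.
Qed.

Section NatBelow.
Variable RT : realType.

(* For [0 < x], the largest natural number strictly below [x]. *)
Definition nat_below (x : RT) : nat := `|Num.ceil x|.-1.

Lemma nat_belowE (x : RT) : 0 < x -> (nat_below x)%:R = (Num.ceil x)%:~R - 1 :> RT.
Proof.
move=> x_gt0; have c_gt0 : 0 < Num.ceil x by rewrite ceil_gt0.
rewrite /nat_below -subn1 natrB ?absz_gt0 ?gt_eqF // natr_absz gtr0_norm //.
Qed.

Lemma nat_below_bounds {x : RT} : 0 < x -> x - 1 <= (nat_below x)%:R < x.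
Proof.
move=> x_gt0; rewrite nat_belowE //.
by have /andP[] := ceil_itv x; rewrite intrB /=; lra.
Qed.

Lemma leq_nat_below m (x : RT) : 0 < x -> m%:R < x -> (m <= nat_below x)%N.
Proof.
move=> x_gt0 mx; have /andP[lo _] := nat_below_bounds x_gt0.
by rewrite -ltnS -(ltr_nat RT) -addn1 natrD; lra.
Qed.

End NatBelow.

Arguments nat_below {RT} x.
Arguments nat_below_bounds {RT x}.

Lemma nat_below_lt_nat (RT : realType) (x : RT) n : 0 < x -> x <= n%:R -> (nat_below x < n)%N.
Proof.
move=> x_gt0 xn; have /andP[_ hi] := nat_below_bounds x_gt0.
by rewrite -(ltr_nat RT); lra.
Qed.

Lemma nat_below_ltn (RT : realType) (x y : RT) : 0 < x -> x + 1 <= y ->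
  (nat_below x < nat_below y)%N.
Proof.
move=> x_gt0 xy; have /andP[_ hx] := nat_below_bounds x_gt0.
by apply: leq_nat_below; [lra | rewrite -natr1; lra].
Qed.

Lemma nat_below_mul_ltn (RT : realType) (rho : RT) s t : 1 < rho -> (s < t)%N ->
  (nat_below (rho * s.+1%:R) < nat_below (rho * t.+1%:R))%N.
Proof.
move=> rho_gt1 st; apply: nat_below_ltn; first by rewrite mulr_gt0 ?ltr0Sn //; lra.
have : rho * s.+2%:R <= rho * t.+1%:R by rewrite ler_pM2l ?ler_nat //; lra.
by rewrite -[s.+2]addn1 natrD mulrDr mulr1; lra.
Qed.

Lemma ell2_spec {RT : realType} {n} {rho : RT} :
  (0 < n)%N -> 1 < rho -> rho <= n%:R ->
  [/\ (0 < ell2 n rho)%N, (ell2 n rho < n)%N,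
      rho * (ell2 n rho)%:R <= n%:R & n%:R < rho * (ell2 n rho).+1%:R].
Proof.
move=> n_gt0 rho_gt1 rho_le_n; have rho_gt0 : 0 < rho by lra.
set z := Num.floor (n%:R / rho).
have z_ge1 : 1 <= z by rewrite /z floor_ge_int /= ler_pdivlMr //; lra.
have z_le : z%:~R <= n%:R / rho := floor_le _.
have z_gt : n%:R / rho < (z + 1)%:~R := floorD1_gt _.
have absz_z : (`|z|%N)%:R = z%:~R :> RT by rewrite natr_absz ger0_norm //; lia.
have n_rho_lt : n%:R / rho < n%:R.
  by rewrite ltr_pdivrMr // -{1}(mulr1 n%:R) ltr_pM2l // ltr0n.
have z_lt_n : (`|z| < n)%N by rewrite -(ltr_nat RT) absz_z; lra.
have -> : ell2 n rho = `|z|%N by rewrite /ell2 (minn_idPr (ltnW z_lt_n)).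
have z_ge1R : (1 : RT) <= z%:~R by rewrite ler1z.
split=> //; first by rewrite -(ltr_nat RT) absz_z; lra.
  by rewrite absz_z -ler_pdivlMl // mulrC.
by move: z_gt; rewrite -addn1 natrD absz_z intrD /= ltr_pdivrMr // mulrC.
Qed.

Lemma f_nat_below (RT : realType) n (rho : RT) l : (0 < n)%N -> (0 < l)%N -> 0 < rho ->
  n%:R * f n rho l = n%:R * (n%:R - l%:R) + (nat_below (rho * (l * l.+1)%:R / 2))%:R.
Proof.
move=> n_gt0 l_gt0 rho_gt0.
have l_neq0 : l%:R != 0 :> RT by rewrite pnatr_eq0 -lt0n.
have l1_neq0 : 1 + l%:R != 0 :> RT by rewrite -[1 + _](natrD RT 1 l) pnatr_eq0.
have n_neq0 : n%:R != 0 :> RT by rewrite pnatr_eq0 -lt0n.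
rewrite nat_belowE ?divr_gt0 ?mulr_gt0 ?ltr0n ?muln_gt0 ?l_gt0 //.
rewrite /f /R_ell /less.
have -> : rho / (2 / (l * l.+1)%:R) = rho * (l * l.+1)%:R / 2 by field; rewrite l_neq0 l1_neq0.
by field; rewrite l_neq0 l1_neq0 n_neq0.
Qed.

Section LightSubset.
Variables (RT : realType) (l : nat) (e d : 'I_l -> RT).
Hypothesis e_ge0 : forall t, 0 <= e t.
Hypothesis d_itv : forall t, 0 < d t <= 1.

Lemma exists_lightest_subset {k} : (k <= l)%N ->
  exists U : {set 'I_l}, #|U| = k /\ forall j j', j \in U -> j' \notin U -> e j <= e j'.
Proof.
move=> kl.
pose U1 : {set 'I_l} := [set widen_ord kl j | j : 'I_k].
have U1k : #|U1| == k.
  by rewrite card_imset ?card_ord // => x y /(congr1 val) /= /val_inj.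
pose U := [arg min_(U < U1 | #|U| == k) \sum_(t in U) e t]%O.
have [/eqP Uk Umin] : #|U| == k /\
    forall V : {set 'I_l}, #|V| == k -> \sum_(t in U) e t <= \sum_(t in V) e t.
  by rewrite /U; case: arg_minP => // V Vk Vmin; split => // V' /Vmin.
exists U; split=> // j j' jU j'U.
have j'Uj : j' \notin U :\ j by rewrite in_setD1 (negbTE j'U) andbF.
have cardUj : #|U :\ j|.+1 = k by rewrite -Uk (cardsD1 j U) jU.
have := Umin (j' |: (U :\ j)).
rewrite cardsU1 j'Uj add1n cardUj eqxx => /(_ isT).
rewrite big_setU1 //= (big_setD1 j jU) /=; lra.
Qed.

Lemma exists_light_subset k : k%:R < \sum_t d t ->
  exists U : {set 'I_l}, #|U| = k /\ \sum_(t in U) e t <= \sum_t e t * d t /\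
    ((exists t, 0 < e t) -> \sum_(t in U) e t < \sum_t e t * d t).
Proof.
move=> k_lt_d.
have kl : (k <= l)%N.
  rewrite -(ler_nat RT) ltW // (lt_le_trans k_lt_d) //.
  rewrite -[l in l%:R]card_ord -sumr_const; apply: ler_sum => t _.
  by case/andP: (d_itv t).
have [U [Uk Ulight]] := exists_lightest_subset kl.
pose M := \big[Num.max/0]_(t in U) e t.
have M_ge0 : 0 <= M by exact: bigmax_ge_id.
have M_geU t : t \in U -> e t <= M by move=> tU; exact: le_bigmax_cond.
have M_leC t : t \notin U -> M <= e t.
  by move=> tU; apply: bigmax_le => [|j jU]; [exact: e_ge0 | exact: Ulight].
(* Termwise e t (d t - [t \in U]) >= M (d t - [t \in U]), as [M] separates the
   weights inside [U] from those outside. *)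
have gap : M * (\sum_t d t - k%:R) <= \sum_t e t * d t - \sum_(t in U) e t.
  have -> : k%:R = \sum_t (t \in U)%:R :> RT.
    by rewrite -Uk -sum1_card natr_sum big_mkcond; apply: eq_bigr => t _; case: (t \in U).
  rewrite [X in _ <= _ - X]big_mkcond /= -!sumrB mulr_sumr; apply: ler_sum => t _.
  have := d_itv t; have := e_ge0 t.
  case: ifP => tU; rewrite ?mulr1n ?mulr0n ?subr0.
    by have := M_geU t tU => ? ? /andP [? ?]; nra.
  by have := M_leC t (negbT tU) => ? ? /andP [? ?]; nra.
have slack_gt0 : 0 < \sum_t d t - k%:R by lra.
exists U; split=> //; split; first by have := mulr_ge0 M_ge0 (ltW slack_gt0); lra.
move=> [t1 et1]; case: (ltrP 0 M) => [M_gt0|M_le0].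
  by have := mulr_gt0 M_gt0 slack_gt0; lra.
have -> : \sum_(t in U) e t = 0.
  by apply: big1 => t tU; apply/eqP; rewrite eq_le e_ge0 (le_trans (M_geU t tU)).
rewrite (bigD1 t1) //= ltr_pwDl ?mulr_gt0 //; first by case/andP: (d_itv t1).
by apply: sumr_ge0 => t _; rewrite mulr_ge0 //; case/andP: (d_itv t) => /ltW.
Qed.

End LightSubset.

Arguments exists_light_subset {RT l e d} e_ge0 d_itv {k}.

(* The staircase [C t = nat_below (rho * t.+1) + [t \in U]], where the extra
   steps [U] are placed on the lightest weights [e]. *)
Lemma exists_staircase {RT : realType} {n l} {rho : RT} {e : 'I_l -> RT} :
  (0 < l)%N -> 1 < rho -> rho * l%:R <= n%:R -> (forall t, 0 <= e t) ->
  exists C : 'I_l -> nat,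
    [/\ {homo C : s t / (s <= t)%N}, (forall t, C t <= n)%N,
        (\sum_t C t)%N = nat_below (rho * (l * l.+1)%:R / 2),
        \sum_t e t * (C t)%:R <= rho * \sum_(t < l) t.+1%:R * e t &
        (exists t, 0 < e t) -> \sum_t e t * (C t)%:R < rho * \sum_(t < l) t.+1%:R * e t].
Proof.
move=> l_gt0 rho_gt1 rho_l e_ge0; have rho_gt0 : 0 < rho by lra.
set T := rho * (l * l.+1)%:R / 2.
pose h (t : 'I_l) := nat_below (rho * t.+1%:R).
pose d (t : 'I_l) := rho * t.+1%:R - (h t)%:R.
have rho_t_gt0 (t : 'I_l) : 0 < rho * t.+1%:R by rewrite mulr_gt0 ?ltr0Sn.
have d_itv t : 0 < d t <= 1.
  by have /andP[] := nat_below_bounds (rho_t_gt0 t); rewrite /d => ? ?; apply/andP; lra.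
pose H := (\sum_t h t)%N.
have sum_d : \sum_t d t = T - H%:R.
  rewrite sumrB -mulr_sumr natr_sum /T -(triangular_sum RT l); congr (_ - _).
  by rewrite mulrA mulfK ?pnatr_eq0.
have sum_d_gt0 : 0 < \sum_t d t.
  rewrite (bigD1 (Ordinal l_gt0)) //= ltr_pwDl ?sumr_ge0 //.
    by case/andP: (d_itv (Ordinal l_gt0)).
  by move=> t _; case/andP: (d_itv t) => /ltW.
have T_gt0 : 0 < T by rewrite /T divr_gt0 ?mulr_gt0 ?ltr0n ?muln_gt0 ?l_gt0.
have H_le : (H <= nat_below T)%N by apply: leq_nat_below; lra.
pose k := (nat_below T - H)%N.
have k_lt : k%:R < \sum_t d t.
  by have /andP[_ ?] := nat_below_bounds T_gt0; rewrite /k natrB // sum_d; lra.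
have [U [Uk [U_le U_lt]]] := exists_light_subset e_ge0 d_itv k_lt.
have sum_eC : \sum_t e t * (h t + (t \in U))%:R =
    \sum_t e t * (h t)%:R + \sum_(t in U) e t.
  rewrite [X in _ = _ + X]big_mkcond -big_split /=; apply: eq_bigr => t _.
  by rewrite natrD mulrDr; case: (t \in U); rewrite ?mulr1 ?mulr0.
have sum_ehd : \sum_t e t * (h t)%:R + \sum_t e t * d t = rho * \sum_(t < l) t.+1%:R * e t.
  by rewrite -big_split mulr_sumr; apply: eq_bigr => t _; rewrite /d /=; ring.
exists (fun t => h t + (t \in U))%N; split.
- move=> s t; rewrite leq_eqVlt => /predU1P[/val_inj -> //|st].
  have h_lt : (h s < h t)%N by exact: nat_below_mul_ltn.
  by rewrite (leq_trans (leq_add (leqnn _) (leq_b1 _))) // addn1 (leq_trans h_lt) ?leq_addr.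
- move=> t; have : (h t < n)%N.
    apply: nat_below_lt_nat => //; apply: le_trans rho_l.
    by rewrite ler_pM2l // ler_nat.
  by move=> h_lt; rewrite (leq_trans (leq_add (leqnn _) (leq_b1 _))) ?addn1.
- rewrite big_split /= -/H; have -> : (\sum_t (t \in U) = #|U|)%N.
    by rewrite -sum1_card [RHS]big_mkcond; apply: eq_bigr => t _; case: (t \in U).
  by rewrite Uk subnKC.
- by rewrite /= sum_eC; lra.
- by move=> /U_lt; rewrite /= sum_eC; lra.
Qed.

Section Conjugate.
Variables (l : nat) (C : 'I_l -> nat).
Hypothesis C_mono : {homo C : s t / (s <= t)%N}.

Definition conjugate (i : nat) : nat := \sum_(t < l) (C t <= i).

Lemma conjugate_le i : (conjugate i <= l)%N.
Proof.
rewrite -[l in (_ <= l)%N]card_ord -sum1_card.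
by apply: leq_sum => t _; case: (C t <= i)%N.
Qed.

Lemma conjugate_leP i (t : 'I_l) : (conjugate i <= t)%N -> (i < C t)%N.
Proof.
apply: contraTT; rewrite -leqNgt -ltnNge => Ct_le_i.
rewrite -(@sum_ord_ltn l t.+1 (ltn_ord t)) leq_sum // => s _.
by case: (ltnP s t.+1) => //= st; rewrite (leq_trans (C_mono _ _ st)).
Qed.

Lemma sum_conjugate n : (forall t, C t <= n)%N ->
  (\sum_(i < n) conjugate i = \sum_(t < l) (n - C t))%N.
Proof.
by move=> Cn; rewrite exchange_big /=; apply: eq_bigr => t _; exact: sum_ord_geq.
Qed.

Lemma count_conjugate_le n (t : 'I_l) : (C t <= n)%N ->
  (\sum_(i < n) (conjugate i <= t) <= C t)%N.
Proof.
move=> Cn; rewrite -[leqRHS](@sum_ord_ltn n _ Cn) leq_sum // => i _.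
by case: (leqP (conjugate i) t) => //= /conjugate_leP ->.
Qed.

Lemma sum_conjugate_antitone (RT : realType) n (b : nat -> RT) :
  {homo b : i j / (i <= j)%N >-> j <= i} -> (forall t, C t <= n)%N ->
  \sum_(i < n) b (conjugate i) <=
    n%:R * b l + \sum_(t < l) (b t - b t.+1) * (C t)%:R.
Proof.
move=> b_anti Cn.
rewrite (eq_bigr _ (fun (i : 'I_n) _ => telescope_ord b (conjugate_le i))) big_split /=.
rewrite sumr_const card_ord mulr_natl lerD2l exchange_big /= ler_sum // => t _.
rewrite sumrMnr mulr_natr ler_wpMn2l ?count_conjugate_le //.
by rewrite subr_ge0 b_anti.
Qed.

Lemma sum_sub_conjugate n : (l <= n)%N -> (forall t, C t <= n)%N ->
  (\sum_(i < n) (n - conjugate i) = n * (n - l) + \sum_t C t)%N.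
Proof.
move=> ln Cn.
have sub_conj : (\sum_(i < n) (n - conjugate i) + \sum_(i < n) conjugate i = n * n)%N.
  rewrite -big_split /= (eq_bigr (fun _ => n)) ?sum_nat_const ?card_ord // => i _.
  by rewrite subnK // (leq_trans (conjugate_le i)).
have sub_C : (\sum_t (n - C t) + \sum_t C t = l * n)%N.
  by rewrite -big_split /= (eq_bigr (fun _ => n)) ?sum_nat_const ?card_ord // => t _; rewrite subnK.
rewrite sum_conjugate // in sub_conj; rewrite mulnC in sub_C.
move: sub_conj sub_C (leq_mul (leqnn n) ln); rewrite mulnBr.
move: (\sum_(i < n) _)%N (\sum_(t < l) (n - C t))%N (\sum_t C t)%N => A B S; lia.
Qed.

End Conjugate.

Arguments conjugate {l} C i.
Arguments conjugate_le {l} C i.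
Arguments sum_conjugate_antitone {l C} C_mono {RT n b}.
Arguments sum_sub_conjugate {l} C {n}.

Lemma win_ge0 (RT : realType) (a d : RT) : 0 <= win a d.
Proof. by rewrite /win; case: ifP => _ //; case: ifP => _ //; lra. Qed.

Lemma win_le1 (RT : realType) (a d : RT) : win a d <= 1.
Proof. by rewrite /win; case: ifP => _ //; case: ifP => _ //; lra. Qed.

Lemma overbid {RT : realType} {n} {b : nat -> RT} {budget : RT} {L : 'I_n -> nat} :
  {homo b : i j / (i <= j)%N >-> j <= i} -> (forall k, 0 <= b k) ->
  (forall i, L i <= n)%N -> \sum_i b (L i) < budget ->
  exists a : 'I_n -> RT, bid_set budget a /\
    ((\sum_i (n - L i))%N)%:R <= \sum_i \sum_(k < n) win (a i) (b k).
Proof.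
move=> b_anti b_ge0 Ln cost_lt.
(* Spread the slack evenly: every bid then strictly exceeds its target level. *)
pose eps := (budget - \sum_i b (L i)) / n.+1%:R.
have eps_gt0 : 0 < eps by rewrite divr_gt0 ?ltr0Sn ?subr_gt0.
exists (fun i => b (L i) + eps); split; first split.
- by move=> i; rewrite addr_ge0 ?b_ge0 // ltW.
- rewrite big_split /= sumr_const card_ord -lerBrDl -mulr_natr /eps mulrAC.
  by rewrite ler_pdivrMr ?ltr0Sn // ler_wpM2l ?ler_nat // subr_ge0 ltW.
rewrite natr_sum; apply: ler_sum => i _.
rewrite -(@sum_ord_geq n _ (Ln i)) natr_sum; apply: ler_sum => k _.
case: (leqP (L i) k) => [Lik|_]; last exact: win_ge0.
by rewrite /win ifT // (le_lt_trans (b_anti _ _ Lik)) // ltrDl.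
Qed.


Lemma sum_by_parts_le {RT : realType} {n l} {b : nat -> RT} :
  (l < n)%N -> (forall k, 0 <= b k) ->
  \sum_(t < l) t.+1%:R * (b t - b t.+1) + l.+1%:R * b l <= \sum_(k < n) b k.
Proof.
move=> ln b_ge0; rewrite -sum_by_parts (big_ord_widen n b ln).
by rewrite [X in _ <= X](bigID (fun i : 'I_n => (i < l.+1)%N)) /= lerDl sumr_ge0.
Qed.

Lemma exists_gap_gt0 {RT : realType} {n l} {b : nat -> RT} :
  {homo b : i j / (i <= j)%N >-> j <= i} -> 0 < \sum_(k < n) b k -> b l = 0 ->
  exists t : 'I_l, 0 < b t - b t.+1.
Proof.
move=> b_anti sum_gt0 bl0; apply/existsP; apply: contraTT sum_gt0.
move=> /existsPn no_gap; rewrite -leNgt.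
have b0_le0 : b 0%N <= 0.
  rewrite (telescope_ord b (leq0n l)) bl0 add0r sumr_le0 // => t _.
  by rewrite mulrn_wle0 // leNgt no_gap.
by rewrite sumr_le0 // => k _; rewrite (le_trans (b_anti _ _ (leq0n k))).
Qed.

Lemma exists_winning_bid {RT : realType} {n} {rho beta : RT} {b : nat -> RT} :
  (0 < n)%N -> 1 < rho -> rho <= n%:R ->
  {homo b : i j / (i <= j)%N >-> j <= i} -> (forall k, 0 <= b k) ->
  \sum_(k < n) b k = beta -> 0 < beta ->
  exists a : 'I_n -> RT, bid_set (rho * beta) a /\
    n%:R * f n rho (ell2 n rho) <= \sum_i \sum_(k < n) win (a i) (b k).
Proof.
move=> n_gt0 rho_gt1 rho_le_n b_anti b_ge0 sum_b beta_gt0.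
have [l_gt0 l_lt_n rho_l n_lt] := ell2_spec n_gt0 rho_gt1 rho_le_n.
set l := ell2 n rho in l_gt0 l_lt_n rho_l n_lt *.
have rho_gt0 : 0 < rho by lra.
pose e (t : 'I_l) := b t - b t.+1.
have e_ge0 t : 0 <= e t by rewrite subr_ge0 b_anti.
have [C [C_mono Cn sum_C cost_le cost_lt]] := exists_staircase l_gt0 rho_gt1 rho_l e_ge0.
have cost : \sum_(i < n) b (conjugate C i) < rho * beta.
  apply: le_lt_trans (sum_conjugate_antitone C_mono b_anti Cn) _.
  have := sum_by_parts_le l_lt_n b_ge0; rewrite sum_b -(ler_pM2l rho_gt0) mulrDr.
  rewrite /e /= in cost_le cost_lt.
  have tail_le : n%:R * b l <= rho * (l.+1%:R * b l).
    by rewrite mulrA ler_wpM2r ?b_ge0 // ltW.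
  have [/existsP[t et_gt0] | /existsPn no_gap] := boolP [exists t, 0 < e t].
    have := cost_lt (ex_intro _ t et_gt0); lra.
  have bl_gt0 : 0 < b l.
    rewrite lt_neqAle eq_sym b_ge0 andbT; apply/eqP => bl0.
    have sum_gt0 : 0 < \sum_(k < n) b k by rewrite sum_b.
    have [t] := exists_gap_gt0 b_anti sum_gt0 bl0.
    by rewrite -/(e t) (negbTE (no_gap t)).
  have : n%:R * b l < rho * (l.+1%:R * b l) by rewrite mulrA ltr_pM2r.
  lra.
have conj_le_n i : (conjugate C i <= n)%N.
  exact: leq_trans (conjugate_le C i) (ltnW l_lt_n).
have [a [bid wins]] := overbid b_anti b_ge0 conj_le_n cost.
exists a; split=> //; apply: le_trans wins.
have l_le_n := ltnW l_lt_n.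
by rewrite sum_sub_conjugate // f_nat_below // natrD sum_C [(n * _)%:R]natrM natrB.
Qed.

Section Permutations.
Variable RT : realType.

Lemma sum_perm_at n (F : 'I_n -> RT) (i : 'I_n) :
  n%:R * \sum_(s : {perm 'I_n}) F (s i) = n`!%:R * \sum_j F j.
Proof.
have sum_at_indep k : \sum_(s : {perm 'I_n}) F (s i) = \sum_(s : {perm 'I_n}) F (s k).
  rewrite (reindex_inj (mulgI (tperm i k))) /=.
  by apply: eq_bigr => s _; rewrite permM tpermL.
rewrite mulr_natl -[n in _ *+ n]card_ord -sumr_const.
under eq_bigr => k _ do rewrite (sum_at_indep k).
rewrite exchange_big /= (eq_bigr (fun _ => \sum_j F j)); last first.
  by move=> s _; rewrite [RHS](reindex_inj (@perm_inj _ s)).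
by rewrite sumr_const card_Sn mulr_natl.
Qed.

Definition dirac_perm n : {perm 'I_n} -> RT := fun s => (s == 1%g)%:R.

Lemma is_distr_dirac n : is_distr (dirac_perm n).
Proof.
split=> [s|]; first by rewrite /dirac_perm ler0n.
by rewrite (bigD1 1%g) //= big1 ?addr0 /dirac_perm ?eqxx // => s /negbTE ->.
Qed.

Lemma is_distr_unif n : is_distr (@pi_unif RT n).
Proof.
split=> [s|]; first by rewrite /pi_unif invr_ge0 ler0n.
by rewrite /pi_unif sumr_const card_Sn -(mulr_natr _^-1) mulVf // pnatr_eq0 -lt0n fact_gt0.
Qed.

Lemma w_dirac_unif n (bA bD : 'I_n -> RT) :
  n%:R * w (dirac_perm n) (@pi_unif RT n) bA bD = \sum_i \sum_j win (bA i) (bD j).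
Proof.
rewrite /w (bigD1 1%g) //= [X in _ + X]big1 ?addr0; last first.
  by move=> s hs; apply: big1 => t _; rewrite /dirac_perm (negbTE hs) !mul0r.
rewrite /dirac_perm eqxx /pi_unif mul1r -mulr_sumr mulrCA exchange_big mulr_sumr /=.
under eq_bigr => i _ do under eq_bigr => s _ do rewrite perm1.
rewrite (eq_bigr (fun i => n`!%:R * \sum_j win (bA i) (bD j))); last first.
  by move=> i _; exact: (@sum_perm_at n (fun j => win (bA i) (bD j)) i).
by rewrite -mulr_sumr mulKf // pnatr_eq0 -lt0n fact_gt0.
Qed.

Lemma w_le n (pA pD : {perm 'I_n} -> RT) (bA bD : 'I_n -> RT) :
  is_distr pA -> is_distr pD -> w pA pD bA bD <= n%:R.
Proof.
move=> [pA_ge0 pA1] [pD_ge0 pD1].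
have win_sum_le sA sD : \sum_(i < n) win (bA (sA i)) (bD (sD i)) <= n%:R.
  rewrite -[n in n%:R]card_ord -sumr_const; apply: ler_sum => i _; exact: win_le1.
apply: (@le_trans _ _ (\sum_sA \sum_sD pA sA * pD sD * n%:R)).
  apply: ler_sum => sA _; apply: ler_sum => sD _.
  by apply: ler_wpM2l; [exact: mulr_ge0 | exact: win_sum_le].
under eq_bigr => sA _ do rewrite -mulr_suml -mulr_sumr pD1 mulr1.
by rewrite -mulr_suml pA1 mul1r.
Qed.

Lemma w_le_W n (rho beta : RT) (pA pD : {perm 'I_n} -> RT) (bA bD : 'I_n -> RT) :
  is_distr pA -> bid_set (rho * beta) bA -> is_distr pD ->
  w pA pD bA bD <= W rho beta pD bD.
Proof.
move=> hpA hbA hpD; apply: ub_le_sup; last by exists pA, bA.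
by exists n%:R => _ [pA' [bA' [hpA' [_ ->]]]]; exact: w_le.
Qed.

End Permutations.

Arguments w_le_W {RT n rho beta pA pD bA bD}.

Lemma exists_sorted_listing {RT : realType} {n} {bD : 'I_n -> RT} : (forall i, 0 <= bD i) ->
  exists b : nat -> RT, [/\ {homo b : i j / (i <= j)%N >-> j <= i}, (forall k, 0 <= b k) &
    forall F : RT -> RT, \sum_i F (bD i) = \sum_(k < n) F (b k)].
Proof.
move=> bD_ge0; pose s := sort >=%R [seq bD i | i <- enum 'I_n].
have size_s : size s = n by rewrite size_sort size_map size_enum_ord.
have s_ge0 k : 0 <= nth 0 s k.
  have [ks|sk] := ltnP k (size s); last by rewrite nth_default.
  by have := mem_nth 0 ks; rewrite mem_sort => /mapP[i _ ->].
have s_sorted : sorted >=%R s by apply: sort_sorted => x y; exact: le_total.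
exists (nth 0 s); split => // [i j ij | F].
  have [js|sj] := ltnP j (size s); last by rewrite (nth_default 0 sj).
  apply: (sorted_leq_nth ge_trans lexx) => //; rewrite inE.
  exact: leq_ltn_trans ij js.
have -> : \sum_(k < n) F (nth 0 s k) = \sum_(x <- s) F x by rewrite (big_nth 0) size_s big_mkord.
by rewrite (perm_big _ (permEl (perm_sort _ _))) big_map big_enum.
Qed.

Theorem lemma7 (RT : realType) (n : nat) (beta rho : RT) (bD : 'I_n -> RT) :
  (0 < n)%N -> 0 < beta -> 1 < rho -> rho <= n%:R ->
  (forall i, 0 <= bD i) -> \sum_(i < n) bD i = beta ->
  f n rho (ell2 n rho) <= W rho beta (@pi_unif RT n) bD.
Proof.
move=> n_gt0 beta_gt0 rho_gt1 rho_le_n bD_ge0 sum_bD.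
have [b [b_anti b_ge0 sum_sorted]] := exists_sorted_listing bD_ge0.
have sum_b : \sum_(k < n) b k = beta by rewrite -(sum_sorted id).
have [a [bid wins]] := exists_winning_bid n_gt0 rho_gt1 rho_le_n b_anti b_ge0 sum_b beta_gt0.
apply: le_trans (w_le_W (is_distr_dirac RT n) bid (is_distr_unif RT n)).
have n_pos : 0 < n%:R :> RT by rewrite ltr0n.
rewrite -(ler_pM2l n_pos) w_dirac_unif.
by under eq_bigr => i _ do rewrite (sum_sorted (win (a i))).
Qed.
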